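(* If $T'$ is a subtree of a subcubic tree $T$, then $\gamma_e(T')\le\gamma_e(T)$.
   Context: All graphs are finite, simple and undirected; subcubic means maximum degree at most $3$; a subtree is a connected subgraph (a tree) of $T$. For a graph $G$ and $D\subseteq V(G)$, and vertices $u,v$, let $\mathrm{dist}_{(G,D)}(u,v)$ be the minimum number of edges of a path $P$ in $G$ between $u$ and $v$ such that $D$ contains exactly one endvertex of $P$ and no internal vertex of $P$ ($\infty$ if no such path exists; in particular $\mathrm{dist}_{(G,D)}(u,u)=0$ for $u\in D$). Let $w_{(G,D)}(u)=\sum_{v\in D}\left(\frac12\right)^{\mathrm{dist}_{(G,D)}(u,v)-1}$ with $\left(\frac12\right)^\infty=0$. $D$ is an exponential dominating set if $w_{(G,D)}(u)\ge 1$ for every $u\in V(G)$, and $\gamma_e(G)$ is the minimum size of an exponential dominating set. *)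

From HB Require Import structures.
From mathcomp Require Import all_boot all_order all_algebra.
Set Implicit Arguments. Unset Strict Implicit. Unset Printing Implicit Defensive.
Import Order.TTheory GRing.Theory Num.Theory.

(* A graph G is represented inside a finite type V by a vertex set
   S : {set V} and an edge relation e : rel V. *)
Section Graphs.
Variable V : finType.

Definition is_graph (S : {set V}) (e : rel V) : Prop :=
  (forall x y, e x y -> (x \in S) && (y \in S)) /\
  (forall x y, e x y = e y x) /\
  (forall x, ~~ e x x).

Definition connected_graph (S : {set V}) (e : rel V) : Prop :=
  forall x y, x \in S -> y \in S -> exists p : seq V, path e x p /\ last x p = y.

Definition acyclic (e : rel V) : Prop :=
  forall c : seq V, 3 <= size c -> uniq c -> ~~ cycle e c.

Definition is_tree (S : {set V}) (e : rel V) : Prop :=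
  [/\ is_graph S e, S != set0, connected_graph S e & acyclic e].

Definition subcubic (S : {set V}) (e : rel V) : Prop :=
  forall x, x \in S -> #|[set y | e x y]| <= 3.

Definition subgraph (S' : {set V}) (e' : rel V) (S : {set V}) (e : rel V) : Prop :=
  S' \subset S /\ (forall x y, e' x y -> e x y).

(* q is such that u :: q is a path in G from u to v, D contains exactly one
   endvertex of it and no internal vertex of it; its length is size q *)
Definition Dpath (S : {set V}) (e : rel V) (D : {set V}) (u v : V) (q : seq V) : bool :=
  [&& path e u q, last u q == v, uniq (u :: q), all (fun x => x \in S) (u :: q),
      #|D :&: [set u; v]| == 1 &
      all (fun x => x \notin D) (take (size q).-1 q)].

Definition Dconn (S : {set V}) (e : rel V) (D : {set V}) (k : nat) (u v : V) : bool :=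
  [exists q : k.-tuple V, Dpath S e D u v q].

(* dist_(G,D)(u,v); None stands for infinity.  A path has < #|V| edges. *)
Definition distD (S : {set V}) (e : rel V) (D : {set V}) (u v : V) : option nat :=
  if [exists k : 'I_#|V|, Dconn S e D k u v]
  then Some (\big[minn/#|V|]_(k < #|V| | Dconn S e D k u v) k)
  else None.

Local Open Scope ring_scope.

Definition weightD (S : {set V}) (e : rel V) (D : {set V}) (u : V) : rat :=
  \sum_(v in D) match distD S e D u v with
                | Some d => (1 / 2 : rat) ^ (d%:Z - 1)
                | None => 0
                end.

Definition exp_dom (S : {set V}) (e : rel V) (D : {set V}) : bool :=
  (D \subset S) && [forall u in S, 1 <= weightD S e D u].

Local Close Scope ring_scope.

Definition gamma_e (S : {set V}) (e : rel V) : nat :=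
  \big[minn/#|V|]_(D : {set V} | exp_dom S e D) #|D|.

End Graphs.

(* Induction on the order of T.  If T' <> T, some leaf l of T, with neighbour p, lies
   outside T', and T - l is a subcubic tree containing T', so it suffices to show that
   deleting a leaf does not increase gamma_e.  Given an exponential dominating set D of T,
   keep D - l, except when l is in D and p is not, in which case move the vertex from l
   to p.  In a tree D-paths are unique, so a vertex u outside D only loses the weight of
   the vertices v whose D-path from u runs through p.  With d = dist(u, p) this weight is
   at most (1/2)^d for v = l, plus (1/2)^d times the weight of the single remaining
   branch at p; that branch weighs at most 1, since below a vertex outside D a subcubic
   tree splits into at most two branches while the weights halve.  The vertex p itself
   now contributes 2 (1/2)^d, which pays for both. *)

From HB Require Import structures.
From mathcomp Require Import all_boot all_order all_algebra.
From mathcomp Require Import lra.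
Set Implicit Arguments. Unset Strict Implicit. Unset Printing Implicit Defensive.
Import Order.TTheory GRing.Theory Num.Theory.

Lemma cat_take_index_drop (T : eqType) (x : T) s :
  x \in s -> take (index x s) s ++ x :: drop (index x s).+1 s = s.
Proof. by move=> xs; rewrite -{2}(nth_index x xs) -drop_nth ?index_mem // cat_take_drop. Qed.

Lemma take_size_pred_cat (T : Type) (r s : seq T) x :
  take (size (r ++ x :: s)).-1 (r ++ x :: s) = r ++ take (size s) (x :: s).
Proof. by rewrite size_cat /= addnS /= take_cat ltnNge leq_addr /= addKn. Qed.

Lemma path_uniq_prefix (T : eqType) (e : rel T) x p w p' :
  path e x (p ++ w :: p') -> uniq (x :: p ++ w :: p') ->
  path e x (rcons p w) /\ uniq (x :: rcons p w).
Proof.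
rewrite cat_path rcons_path -cat_rcons -cat_cons cat_uniq /=.
by case/andP => -> /andP[-> _] /andP[-> _].
Qed.

(** * Distance contributions *)

Local Open Scope ring_scope.

Definition exp_contrib (d : nat) : rat := (1 / 2) ^ (d%:Z - 1).

Lemma exp_contribE d : exp_contrib d = 2 * (1 / 2) ^+ d.
Proof.
case: d => [|d].
  by rewrite /exp_contrib sub0r -exprz_inv expr1z invf_div divr1.
rewrite /exp_contrib -(addn1 d) PoszD addrK exprD expr1 mulrCA.
by rewrite (_ : 2 * (1 / 2) = 1 :> rat) ?mulr1.
Qed.

Lemma exp_contrib0 : exp_contrib 0 = 2.
Proof. by rewrite exp_contribE expr0 mulr1. Qed.

Lemma exp_contrib1 : exp_contrib 1 = 1.
Proof. by rewrite exp_contribE expr1. Qed.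

Lemma exp_contribD m n : exp_contrib (m + n) = (1 / 2) ^+ m * exp_contrib n.
Proof. by rewrite !exp_contribE exprD mulrCA. Qed.

Lemma exp_contrib_ge0 d : 0 <= exp_contrib d.
Proof. by rewrite exp_contribE mulr_ge0 // exprn_ge0. Qed.

Lemma exp_contrib_nonincr : {homo exp_contrib : m n / (m <= n)%N >-> n <= m}.
Proof. by move=> m n mn; rewrite !exp_contribE ler_wpM2l //; apply: ler_wiXn2l. Qed.

Section DistanceContribution.
Variables (V : finType) (S : {set V}) (e : rel V) (D : {set V}).

Definition Dcontrib (u v : V) : rat :=
  if distD S e D u v is Some d then exp_contrib d else 0.

Lemma weightDE u : weightD S e D u = \sum_(v in D) Dcontrib u v.
Proof. by []. Qed.

Lemma Dcontrib_ge0 u v : 0 <= Dcontrib u v.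
Proof. by rewrite /Dcontrib; case: distD => // d; apply: exp_contrib_ge0. Qed.

Lemma DpathP u v q :
  Dpath S e D u v q <->
  [/\ path e u q, last u q = v, uniq (u :: q), all (fun x => x \in S) (u :: q) &
      #|D :&: [set u; v]| = 1%N /\ all (fun x => x \notin D) (take (size q).-1 q)].
Proof.
rewrite /Dpath; split.
  by case/and5P => -> /eqP-> -> -> /andP[/eqP-> ->].
by case=> -> -> -> -> [-> ->]; rewrite !eqxx.
Qed.

Lemma Dpath_size_lt u v q : Dpath S e D u v q -> (size q < #|V|)%N.
Proof.
by case/DpathP => _ _ /card_uniqP uq _ _; have := max_card (mem (u :: q)); rewrite uq.
Qed.

Lemma DconnP k u v :
  reflect (exists2 q, size q = k & Dpath S e D u v q) (Dconn S e D k u v).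
Proof.
apply: (iffP existsP) => [[q Hq]|[q sq Hq]]; first by exists (tval q); rewrite ?size_tuple.
have sq' : size q == k by rewrite sq.
by exists (Tuple sq').
Qed.

Lemma distD_Dpath u v d :
  distD S e D u v = Some d -> exists2 q, Dpath S e D u v q & size q = d.
Proof.
rewrite /distD; case: ifP => // /existsP[k Hk] [<-]; rewrite -minEnat.
have [i Hi ->] := @eq_bigmin _ _ _ #|V| k (fun k => Dconn S e D k u v)
  (fun k : 'I_#|V| => nat_of_ord k) Hk (fun i _ => ltnW (ltn_ord i)).
by case/DconnP: Hi => q sq Hq; exists q.
Qed.

Lemma Dpath_distD u v q :
  Dpath S e D u v q -> exists2 d, distD S e D u v = Some d & (d <= size q)%N.
Proof.
move=> Hq; pose k := Ordinal (Dpath_size_lt Hq).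
have Hk : Dconn S e D k u v by apply/DconnP; exists q.
rewrite /distD (introT existsP (ex_intro _ k Hk)); eexists; first by [].
by have := @bigmin_le_cond _ _ _ #|V| k (fun k => Dconn S e D k u v)
  (fun k : 'I_#|V| => nat_of_ord k) Hk.
Qed.

Lemma Dpath_cat_split u v r x s : Dpath S e D u v (r ++ x :: s) ->
  [/\ path e u (rcons r x), uniq (u :: rcons r x), all (fun y => y \in S) (u :: rcons r x),
      all (fun y => y \notin D) r &
      [/\ path e x s, uniq (x :: s), last x s = v & all (fun y => y \notin D) (take (size s).-1 s)]].
Proof.
case/DpathP => eq lq uq Sq [_]; rewrite take_size_pred_cat all_cat => /andP[-> inner].
have [-> ->] := path_uniq_prefix eq uq.
move: eq uq Sq lq; rewrite cat_path -cat_rcons -cat_cons cat_uniq all_cat last_cat /=.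
case/and3P=> _ _ -> /and3P[_ disj ->] /andP[/andP[-> ->] _]; rewrite last_rcons => ->.
split=> //; split=> //.
  rewrite andbT; apply: contra disj => xs; apply/hasP; exists x => //.
  by rewrite !inE mem_rcons mem_head orbT.
by case: s inner {disj} => //= y s /andP[_].
Qed.

Lemma Dcontrib_ge u v q :
  Dpath S e D u v q -> exp_contrib (size q) <= Dcontrib u v.
Proof. by case/Dpath_distD => d d_eq le_dq; rewrite /Dcontrib d_eq exp_contrib_nonincr. Qed.

Lemma Dcontrib_eq0 u v : (forall q, ~~ Dpath S e D u v q) -> Dcontrib u v = 0.
Proof.
move=> noq; rewrite /Dcontrib; case d_eq: distD => [d|] //.
by case: (distD_Dpath d_eq) => q Hq _; move: (noq q); rewrite Hq.
Qed.

Lemma Dcontrib_self u : u \in S -> u \in D -> Dcontrib u u = 2.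
Proof.
move=> uS uD; have uDu : D :&: [set u; u] = [set u].
  by apply/setP => x; rewrite !inE orbb andb_idl // => /eqP->.
have : Dpath S e D u u [::] by rewrite /Dpath /= uS uDu cards1 !eqxx.
by case/Dpath_distD => d d_eq; rewrite leqn0 /Dcontrib d_eq => /eqP->; apply: exp_contrib0.
Qed.

Lemma weightD_ge1_mem u : u \in S -> u \in D -> 1 <= weightD S e D u.
Proof.
move=> uS uD; rewrite weightDE (bigD1 u) //= Dcontrib_self //.
have : 0 <= \sum_(v in D | v != u) Dcontrib u v by apply: sumr_ge0 => v _; apply: Dcontrib_ge0.
lra.
Qed.

End DistanceContribution.

Lemma Dcontrib_le (V : finType) (S1 S2 : {set V}) (e1 e2 : rel V) (D1 D2 : {set V}) u v :
  (forall q, Dpath S1 e1 D1 u v q -> Dpath S2 e2 D2 u v q) ->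
  Dcontrib S1 e1 D1 u v <= Dcontrib S2 e2 D2 u v.
Proof.
move=> sub; rewrite {1}/Dcontrib; case d_eq: distD => [d|]; last exact: Dcontrib_ge0.
by case: (distD_Dpath d_eq) => q /sub /Dcontrib_ge + <-.
Qed.

Local Close Scope ring_scope.

Lemma gamma_e_le (V : finType) (S : {set V}) (e : rel V) (D : {set V}) :
  exp_dom S e D -> gamma_e S e <= #|D|.
Proof. by move=> domD; have := bigmin_le_cond #|V| (fun D : {set V} => #|D|) domD. Qed.

Lemma gamma_e_le_card (V : finType) (S : {set V}) (e : rel V) : gamma_e S e <= #|V|.
Proof. by have := bigmin_le_id (index_enum {set V}) #|V| (exp_dom S e) (fun D => #|D|). Qed.

Lemma gamma_e_geP (V : finType) (S : {set V}) (e : rel V) m :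
  reflect (m <= #|V| /\ forall D, exp_dom S e D -> m <= #|D|) (m <= gamma_e S e).
Proof. exact: (bigmin_geP _ _ (exp_dom S e) (fun D : {set V} => #|D|)). Qed.

Section GraphFacts.
Variables (V : finType) (S : {set V}) (e : rel V).
Hypothesis gS : is_graph S e.

Lemma is_graph_sym : symmetric e.
Proof. by case: gS => _ []. Qed.

Lemma is_graph_irr : irreflexive e.
Proof. by case: gS => _ [_ irr] x; apply/negbTE. Qed.

Lemma is_graph_meml x y : e x y -> x \in S.
Proof. by case: gS => sub _ /sub /andP[]. Qed.

Lemma is_graph_memr x y : e x y -> y \in S.
Proof. by case: gS => sub _ /sub /andP[]. Qed.

Lemma path_is_graph_mem x q : path e x q -> all (mem S) q.
Proof.
elim: q x => [|y q IH] x //= /andP[exy /IH ->].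
by rewrite (is_graph_memr exy).
Qed.

End GraphFacts.

Section AcyclicPaths.
Variables (V : finType) (e : rel V).
Hypotheses (e_sym : symmetric e) (e_acyc : acyclic e).

Lemma acyclic_meeting_paths x w p t :
  path e x (rcons p w) -> path e x (rcons t w) ->
  uniq (x :: rcons p w) -> uniq (x :: rcons t w) ->
  ~~ has (mem (rcons t w)) p -> head w p != head w t -> False.
Proof.
move=> ep et up ut disj heads; set c := x :: p ++ w :: rev t.
have c_cycle : cycle e c.
  have et' : path e w (rcons (rev t) x).
    have := rev_path e x (rcons t w).
    by rewrite last_rcons belast_rcons rev_cons (eq_path (e' := e)) // => ->.
  rewrite /c /= rcons_cat cat_path /=; move: ep; rewrite rcons_path => /andP[-> ->].
  exact: et'.
have c_uniq : uniq c.
  rewrite /c -cat_rcons -cat_cons cat_uniq up rev_uniq /=.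
  move: ut; rewrite /= mem_rcons inE rcons_uniq negb_or => /and3P[/andP[xw xt] wt ->].
  rewrite andbT; apply/hasPn => y; rewrite mem_rev => yt; rewrite inE mem_rcons inE.
  apply/negP => /or3P[/eqP yx|/eqP yw|yp].
  - by move: xt; rewrite -yx yt.
  - by move: wt; rewrite -yw yt.
  - by have := hasPn disj y yp; rewrite /= mem_rcons inE yt orbT.
have c_size : 3 <= size c.
  rewrite /c /= size_cat /= size_rev addnS !ltnS addn_gt0 !lt0n !size_eq0.
  by move: heads; case: (p) => [|a p']; case: (t) => [|b t'] //=; rewrite eqxx.
by move: (e_acyc c_size c_uniq); rewrite c_cycle.
Qed.

Lemma acyclic_diverging_paths x y z p q :
  y != z -> path e x (y :: p) -> path e x (z :: q) ->
  uniq (x :: y :: p) -> uniq (x :: z :: q) -> last y p != last z q.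
Proof.
move=> yz; set s := y :: p; set t := z :: q => es et us ut; apply/eqP => same_last.
have s_meets_t : has (mem t) s.
  by apply/hasP; exists (last y p); [exact: mem_last | rewrite /= same_last mem_last].
set i := find (mem t) s; set w := nth x s i.
have wt : w \in t by apply: nth_find.
have s_split : s = take i s ++ w :: drop i.+1 s.
  by rewrite /w -drop_nth ?cat_take_drop // -has_find.
have [t1 [t2 t_split]] : exists t1 t2, t = t1 ++ w :: t2.
  by case/splitPr: wt => t1 t2; exists t1, t2.
have [es' us'] : path e x (rcons (take i s) w) /\ uniq (x :: rcons (take i s) w).
  by apply: (path_uniq_prefix (p' := drop i.+1 s)); rewrite -s_split.
rewrite t_split in et ut; have [et' ut'] := path_uniq_prefix et ut.
apply: (acyclic_meeting_paths es' et' us' ut').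
- apply/hasPn => a a_take; rewrite /= mem_rcons inE.
  apply/negP => a_t1w; have := has_take i s_meets_t; rewrite ltnn.
  move/negbT/hasPn/(_ a a_take); rewrite /= t_split mem_cat inE.
  by case/orP: a_t1w => ->; rewrite ?orbT.
- have head_s : head w (take i s) = y by rewrite -[y]/(head x s) {2}s_split; case: (take i s).
  have head_t : head w t1 = z by rewrite -[z]/(head x t) t_split; case: (t1).
  by rewrite head_s head_t.
Qed.

Lemma acyclic_path_uniq x p q :
  path e x p -> path e x q -> uniq (x :: p) -> uniq (x :: q) ->
  last x p = last x q -> p = q.
Proof.
elim: p x q => [|y p IH] x [|z q] //=.
- by move=> _ _ _ /andP[+ _] xq; rewrite xq mem_last.
- by move=> _ _ /andP[+ _] _ px; rewrite -px mem_last.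
move=> /andP[exy py] /andP[exz pz] uxp uxq same_last.
have [yz|yz] := eqVneq y z; first subst z.
  by case/andP: uxp => _ uyp; case/andP: uxq => _ uyq; rewrite (IH y q).
have := @acyclic_diverging_paths x y z p q yz; rewrite /= exy exz py pz same_last eqxx.
by move/(_ isT isT uxp uxq).
Qed.

Lemma acyclic_path_nbr_fresh x q t z :
  path e x (rcons q t) -> uniq (x :: rcons q t) -> e t z -> z != last x q -> z \notin x :: q.
Proof.
move=> eq uq etz zl; apply/negP => zxq.
have : sorted e (rcons (x :: q) t) := eq; have : uniq (rcons (x :: q) t) := uq.
move: zl; rewrite -[last x q]/(last x (x :: q)).
case/splitPr: zxq => c1 c2; rewrite last_cat /= rcons_cat cat_uniq => zl /and3P[_ _ uz].
move=> /cat_sorted2[_ ez].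
have cyc : cycle e (z :: rcons c2 t) by rewrite /= rcons_path last_rcons etz andbT; exact: ez.
have size3 : 3 <= size (z :: rcons c2 t).
  by rewrite /= size_rcons; case: c2 zl {ez uz cyc} => //=; rewrite eqxx.
by move: (e_acyc size3 uz); rewrite cyc.
Qed.

Lemma Dcontrib_Dpath (S D : {set V}) u v q :
  Dpath S e D u v q -> Dcontrib S e D u v = exp_contrib (size q).
Proof.
move=> Hq; have [d d_eq _] := Dpath_distD Hq; have [q' Hq' q'_size] := distD_Dpath d_eq.
rewrite /Dcontrib d_eq -q'_size; case/DpathP: Hq => eq lq uq _ _; case/DpathP: Hq' => eq' lq' uq' _ _.
by rewrite (@acyclic_path_uniq u q' q) // lq lq'.
Qed.

End AcyclicPaths.

(** * Branches of subcubic graphs *)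

Section BranchBound.
Variables (V : finType) (S : {set V}) (e : rel V) (D : {set V}).
Hypotheses (gS : is_graph S e) (e_sub3 : subcubic S e).

Lemma subcubic_other_nbrs x y : e x y -> #|[set z | e y z && (z != x)]| <= 2.
Proof.
move=> exy; have := e_sub3 (is_graph_memr gS exy).
rewrite (cardsD1 x) inE (is_graph_sym gS) exy add1n ltnS.
suff -> : [set z | e y z] :\ x = [set z | e y z && (z != x)] by [].
by apply/setP => z; rewrite !inE andbC.
Qed.

Lemma subcubic_nbr_eq x y a b c : e x y -> e y a -> e y b -> e y c ->
  x \notin [:: a; b; c] -> a != b -> a != c -> b = c.
Proof.
move=> exy eya eyb eyc; rewrite !inE => /norP[xa /norP[xb xc]] ab ac.
apply/eqP; apply: contraTT (subcubic_other_nbrs exy) => bc; rewrite -ltnNge.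
have /subset_leq_card : [set a; b; c] \subset [set z | e y z && (z != x)].
  by apply/subsetP => z; rewrite !inE => /orP[/orP[]|] /eqP->; rewrite ?eya ?eyb ?eyc eq_sym.
by move/(leq_trans _); apply; rewrite setUC cardsU1 cards2 !inE negb_or ab !(eq_sym c) ac bc.
Qed.

Definition Dbranch (n : nat) (x y : V) (A : {set V}) (Q : V -> seq V) : Prop :=
  forall v, v \in A ->
  [/\ v \in D, exists tl, Q v = y :: tl, path e x (Q v), uniq (x :: Q v) &
      [/\ last x (Q v) = v, all (fun z => z \notin D) (take (size (Q v)).-1 (Q v))
        & size (Q v) <= n]].

Lemma Dbranch_headD n x y A Q :
  y \in D -> Dbranch n x y A Q -> forall v, v \in A -> v = y /\ Q v = [:: y].
Proof.
move=> yD QA v vA; have [_ [[|z tl] Qv] _ _ [lv inner _]] := QA v vA.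
  by rewrite Qv in lv *.
by move: inner; rewrite Qv /= yD.
Qed.

Lemma Dbranch_next n x y A Q : y \notin D -> Dbranch n x y A Q ->
  forall v, v \in A -> exists2 z, z \in [set z | e y z && (z != x)] &
    exists tl, Q v = y :: z :: tl.
Proof.
move=> yD QA v vA; have [vD [[|z tl] Qv] + + [lv _ _]] := QA v vA.
  by move: vD; rewrite -lv Qv (negbTE yD).
rewrite Qv /= !inE => /and3P[_ eyz _] /andP[/norP[_ /norP[xz _]] _].
by exists z; [rewrite inE eyz eq_sym xz | exists tl].
Qed.

Lemma Dbranch_behead n x y z A Q : y \notin D -> Dbranch n.+1 x y A Q ->
  Dbranch n y z [set w in A | head y (behead (Q w)) == z] (behead \o Q).
Proof.
move=> yD QA w; rewrite inE => /andP[wA /eqP hw].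
have [wD [[|z' tl'] Qw] + + [lw inner size_w]] := QA w wA.
  by move: wD; rewrite -lw Qw (negbTE yD).
move: hw inner size_w lw; rewrite /= Qw /= => <- inner size_w lw.
case/and3P=> _ eyz' ez' /andP[_ uw]; split => //; first by exists tl'.
- by rewrite /= eyz'.
- by split => //; case/andP: inner.
Qed.

Lemma Dbranch_le1 n x y A Q :
  e x y -> Dbranch n x y A Q -> (\sum_(v in A) exp_contrib (size (Q v)) <= 1)%R.
Proof.
elim: n x y A Q => [|n IH] x y A Q exy QA.
  by rewrite big1 ?ler01 // => v /QA[_ [tl ->] _ _ []].
have [yD|yD] := boolP (y \in D).
  have /subset_leq_card : A \subset [set y].
    by apply/subsetP => v /(Dbranch_headD yD QA)[-> _]; rewrite inE.
  rewrite cards1 (eq_bigr (fun _ => 1%R)) => [|v /(Dbranch_headD yD QA)[_ ->]].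
    by rewrite sumr_const; case: #|A| => [|[]].
  exact: exp_contrib1.
set N := [set z | e y z && (z != x)]; pose Q' := behead \o Q.
rewrite (partition_big (fun v => head y (Q' v)) (fun z => z \in N)); last first.
  by move=> v /(Dbranch_next yD QA)[z zN [tl Qv]]; rewrite /Q' /= Qv.
apply: (@le_trans _ _ (\sum_(z in N) 2^-1)%R).
  apply: ler_sum => z; rewrite inE => /andP[eyz _].
  rewrite (eq_bigr (fun v => 2^-1 * exp_contrib (size (Q' v))))%R; last first.
    move=> v /andP[vA _]; have [z' _ [tl Qv]] := Dbranch_next yD QA vA.
    by rewrite /Q' /= Qv /= -add1n exp_contribD expr1 div1r.
  rewrite -mulr_sumr ler_piMr ?invr_ge0 //.
  have := IH y z _ Q' eyz (Dbranch_behead (z := z) yD QA).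
  by rewrite (eq_bigl (fun v => (v \in A) && (head y (Q' v) == z))) // => v; rewrite inE.
have : (#|N|%:R <= 2 :> rat)%R by rewrite ler_nat subcubic_other_nbrs.
rewrite sumr_const -mulr_natr; lra.
Qed.

End BranchBound.


(** * Deleting a leaf *)

Definition del_rel (V : finType) (e : rel V) (l : V) : rel V :=
  [rel x y | e x y && (x != l) && (y != l)].

Section LeafDeletion.
Variables (V : finType) (S : {set V}) (e : rel V) (l p : V).
Hypotheses (gS : is_graph S e) (e_acyc : acyclic e) (e_sub3 : subcubic S e).
Hypotheses (elp : e l p) (l_leaf : forall y, e l y -> y = p).

Let e_sym := is_graph_sym gS.

Lemma leaf_mem : l \in S. Proof. exact: (is_graph_meml gS elp). Qed.
Lemma leaf_nbr_mem : p \in S. Proof. exact: (is_graph_memr gS elp). Qed.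
Lemma leaf_neq_nbr : p != l.
Proof. by apply: contraTneq elp => ->; rewrite (is_graph_irr gS). Qed.

Lemma leaf_notin_path x q :
  path e x q -> uniq (x :: q) -> x != l -> last x q != l -> l \notin q.
Proof.
move=> eq uq xl ll; apply/negP => lq; case/splitPr: lq eq uq ll => q1 [|b q2] eq uq.
  by rewrite last_cat eqxx.
move=> _; move: eq; rewrite cat_path /= => /and3P[_ eal /andP[elb _]].
have lastp : last x q1 = p by apply: l_leaf; rewrite e_sym.
move: uq; rewrite -cat_cons cat_uniq => /and3P[_ /hasPn/(_ b) + _].
by rewrite (l_leaf elb) -{3}lastp mem_last !inE eqxx orbT => /(_ isT).
Qed.

Lemma path_del_rel x q : path e x q -> x != l -> l \notin q -> path (del_rel e l) x q.
Proof.
elim: q x => [|y q IH] x //= /andP[exy eq] xl; rewrite inE negb_or => /andP[ly lq].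
by rewrite IH 1?eq_sym // andbT /del_rel /= exy xl eq_sym.
Qed.

Lemma Dpath_avoids_leaf (D : {set V}) u v q :
  Dpath S e D u v q -> u != l -> v != l -> l \notin u :: q.
Proof.
case/DpathP => eq lq uq _ _ ul vl; rewrite inE negb_or eq_sym ul.
by apply: (leaf_notin_path eq); rewrite ?lq.
Qed.

Lemma Dpath_del (D D' : {set V}) u v q :
  Dpath S e D u v q -> u != l -> v != l ->
  (forall w, w \in u :: q -> w != l -> (w \in D') = (w \in D)) ->
  Dpath (S :\ l) (del_rel e l) D' u v q.
Proof.
move=> Hq ul vl DD'; have := Dpath_avoids_leaf Hq ul vl; rewrite inE negb_or => /andP[_ lq].
case/DpathP: Hq => eq lq' uq Sq [c1 inner]; apply/DpathP; split => //.
- exact: path_del_rel.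
- apply/allP => w wq; rewrite !inE (allP Sq w wq) andbT.
  by apply: contraNneq lq => wl; move: wq; rewrite wl inE eq_sym (negbTE ul).
- split.
    rewrite -c1; apply: eq_card => x; rewrite !inE.
    have [->|_] := eqVneq x u; first by rewrite DD' ?mem_head.
    have [->|] := eqVneq x v; last by rewrite !andbF.
    by rewrite DD' // -lq' mem_last.
  apply/allP => x xq; have xq' : x \in u :: q by rewrite inE (mem_take xq) orbT.
  rewrite DD' //; first exact: (allP inner x xq).
  by apply: contraNneq lq => xl; rewrite -xl (mem_take xq).
Qed.

Lemma Dpath_to_leaf (D : {set V}) u q :
  Dpath S e D u l q -> u != p -> u != l -> p \in take (size q).-1 q.
Proof.
case/DpathP => eq lq _ _ _ up ul; case/lastP: q eq lq => [|q b] eq lq.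
  by move: ul; rewrite -lq eqxx.
rewrite last_rcons in lq; subst b.
have lastp : last u q = p by apply: l_leaf; move: eq; rewrite rcons_path e_sym => /andP[].
rewrite size_rcons /= -cats1 take_size_cat // -lastp.
case: q lastp {eq} => [|a q] /= lastp; last exact: mem_last.
by rewrite lastp eqxx in up.
Qed.

Lemma exp_dom_del_leaf_keep (D : {set V}) :
  exp_dom S e D -> ~~ ((l \in D) && (p \notin D)) -> exp_dom (S :\ l) (del_rel e l) (D :\ l).
Proof.
case/andP => DS /forall_inP domD keep; rewrite /exp_dom setSD //=.
apply/forall_inP => u; rewrite !inE => /andP[ul uS].
have [uD|uD] := boolP (u \in D); first by apply: weightD_ge1_mem; rewrite !inE ?ul ?uS.
apply: le_trans (domD u uS) _; rewrite !weightDE (bigID (pred1 l)) /=.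
rewrite big1 ?add0r => [|v /andP[vD /eqP vl]]; last first.
  subst v; have pD : p \in D by move: keep; rewrite vD negbK.
  have up : u != p by apply: contraNneq uD => ->.
  apply: Dcontrib_eq0 => q; apply/negP => Hq; case/DpathP: (Hq) => _ _ _ _ [_ /allP inner].
  by move: (inner p (Dpath_to_leaf Hq up ul)); rewrite pD.
rewrite (eq_bigl (fun v => v \in D :\ l)) => [|v]; last by rewrite !inE andbC.
apply: ler_sum => v; rewrite !inE => /andP[vl vD].
by apply: Dcontrib_le => q Hq; apply: Dpath_del Hq ul vl _ => w _ wl; rewrite !inE wl.
Qed.

Section Swap.
Variables (D : {set V}) (u : V).
Hypotheses (lD : l \in D) (pD : p \notin D) (ul : u != l) (up : u != p) (uD : u \notin D).

(* A D-path has fewer than #|V| edges, so quantifying over tuples makes this a boolean. *)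
Definition via_nbr (v : V) : bool :=
  [exists k : 'I_#|V|, [exists q : k.-tuple V, Dpath S e D u v q && (p \in q)]].

Lemma via_nbrP v : reflect (exists2 q, Dpath S e D u v q & p \in q) (via_nbr v).
Proof.
apply: (iffP existsP) => [[k /existsP[q /andP[Hq pq]]]|[q Hq pq]]; first by exists (tval q).
exists (Ordinal (Dpath_size_lt Hq)); apply/existsP.
have sq : size q == Ordinal (Dpath_size_lt Hq) by [].
by exists (Tuple sq); rewrite /= Hq pq.
Qed.

Lemma sum_not_via_nbr :
  (\sum_(v in D | ~~ via_nbr v) Dcontrib S e D u v <=
   \sum_(v in D :\ l) Dcontrib (S :\ l) (del_rel e l) (p |: (D :\ l)) u v)%R.
Proof.
rewrite (bigID (pred1 l)) /= big1 ?add0r => [|v /andP[/andP[_ nvia] /eqP vl]]; last first.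
  subst v; apply: Dcontrib_eq0 => q; apply/negP => Hq; apply: (negP nvia); apply/via_nbrP.
  by exists q => //; exact: mem_take (Dpath_to_leaf Hq up ul).
rewrite [leRHS](bigID via_nbr) /=; apply: ler_wpDl.
  by apply: sumr_ge0 => v _; apply: Dcontrib_ge0.
rewrite (eq_bigl (fun v => (v \in D :\ l) && ~~ via_nbr v)) => [|v]; last first.
  by rewrite !inE andbC andbA.
apply: ler_sum => v /andP[]; rewrite !inE => /andP[vl vD] nvia.
apply: Dcontrib_le => q Hq; apply: Dpath_del (Hq) ul vl _ => w wq wl.
rewrite !inE wl /=; have [wp|//] := eqVneq w p; subst w; exfalso.
apply: (negP nvia); apply/via_nbrP; exists q => //.
by move: wq; rewrite inE eq_sym (negbTE up).
Qed.

Section Route.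
Variables (v0 : V) (q0 : seq V).
Hypotheses (Hq0 : Dpath S e D u v0 q0) (pq0 : p \in q0).

Let r := take (index p q0) q0.

Lemma route_prefix_facts :
  [/\ path e u (rcons r p), uniq (u :: rcons r p), all (fun y => y \in S) (u :: rcons r p)
     & all (fun y => y \notin D) r].
Proof. by have := Hq0; rewrite -(cat_take_index_drop pq0) => /Dpath_cat_split[-> -> -> -> _]. Qed.

Lemma via_nbr_route v q : Dpath S e D u v q -> p \in q -> q = r ++ p :: drop (size r).+1 q.
Proof.
move=> Hq pq; have := Hq; rewrite -{1}(cat_take_index_drop pq) => /Dpath_cat_split[eq uq _ _ _].
have [er ur _ _] := route_prefix_facts.
have take_eq : take (index p q) q = r.
  apply: (@rcons_injl _ p); apply: (acyclic_path_uniq e_sym e_acyc eq er uq ur).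
  by rewrite !last_rcons.
have size_r : size r = index p q by rewrite -take_eq size_takel // index_size.
by rewrite size_r -take_eq cat_take_index_drop.
Qed.

Lemma exists_route v : exists q, via_nbr v ==> Dpath S e D u v q && (p \in q).
Proof.
have [/via_nbrP[q Hq pq]|_] := boolP (via_nbr v); last by exists [::].
by exists q; rewrite Hq pq.
Qed.

(* The part after p of the D-path from u to v; this path is unique, the choice only makes
   [beyond] a function. *)
Let beyond v := drop (size r).+1 (xchoose (exists_route v)).

Lemma beyondE v : via_nbr v -> Dpath S e D u v (r ++ p :: beyond v).
Proof.
move=> via; have /implyP/(_ via)/andP[Hq pq] := xchooseP (exists_route v).
by rewrite /beyond -(via_nbr_route Hq pq).
Qed.

Lemma Dcontrib_via v : via_nbr v ->
  Dcontrib S e D u v = ((1 / 2) ^+ size (rcons r p) * exp_contrib (size (beyond v)))%R.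
Proof.
move/beyondE/(Dcontrib_Dpath e_sym e_acyc) ->.
by rewrite -exp_contribD size_cat /= size_rcons addSnnS.
Qed.

Lemma beyond_facts v : via_nbr v ->
  [/\ path e p (beyond v), uniq (p :: beyond v), last p (beyond v) = v
     & all (fun y => y \notin D) (take (size (beyond v)).-1 (beyond v))].
Proof. by case/beyondE/Dpath_cat_split => _ _ _ _ []. Qed.

Lemma beyond_leaf : via_nbr l -> beyond l = [:: l].
Proof.
case/beyond_facts => eb ub lb _; apply: (acyclic_path_uniq e_sym e_acyc eb) => //=.
  by rewrite (e_sym p l) elp.
by rewrite inE leaf_neq_nbr.
Qed.

Lemma beyond_head v : v \in D -> via_nbr v -> v != l ->
  exists b tl, [/\ beyond v = b :: tl, e p b, b != l & b != last u r].
Proof.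
move=> vD via vl; have [+ + + _] := beyond_facts via; have := beyondE via.
case: (beyond v) => [|b tl] Hq eb ub lb; first by move: vD; rewrite -lb (negbTE pD).
exists b, tl; split => //; first by case/andP: eb.
  apply: contraNneq vl => bl; move: eb ub lb; rewrite bl.
  case: tl {Hq} => [|c tl] /=; first by move=> _ _ ->.
  by case/and3P=> _ /l_leaf-> _; rewrite !inE eqxx orbT.
case/DpathP: Hq => _ _ + _ _; rewrite -cat_cons cat_uniq => /and3P[_ /hasPn disj _].
have /negP b_r : b \notin u :: r by apply: disj; rewrite !inE eqxx orbT.
by apply/eqP => b_last; apply: b_r; rewrite b_last mem_last.
Qed.

Let A := [set v in D | via_nbr v && (v != l)].

Lemma route_Dbranch v1 b1 tl1 :
  v1 \in A -> beyond v1 = b1 :: tl1 -> Dbranch e D #|V| p b1 A beyond.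
Proof.
rewrite inE => /and3P[v1D via1 v1l] E1; have [er ur _ _] := route_prefix_facts.
have epr : e p (last u r) by move: er; rewrite rcons_path (e_sym _ p) => /andP[].
have lr : l \notin u :: r.
  have := leaf_notin_path er ur ul; rewrite last_rcons leaf_neq_nbr mem_rcons => /(_ isT).
  by rewrite !inE !negb_or (eq_sym l u) ul => /andP[_ ->].
have prl : last u r != l by apply: contraNneq lr => <-; apply: mem_last.
have [b1' [tl1' [E1' eb1 b1l b1pr]]] := beyond_head v1D via1 v1l.
move: E1'; rewrite E1 => -[b1E _]; subst b1'; move=> v; rewrite inE => /and3P[vD via vl].
have [b [tl [E eb bl bpr]]] := beyond_head vD via vl.
have [eq uq lq inner] := beyond_facts via.
have b_eq : b = b1.
  apply: (subcubic_nbr_eq gS e_sub3 elp epr eb eb1); rewrite 1?eq_sym //.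
  by rewrite !inE !negb_or !(eq_sym l) prl bl b1l.
split => //; first by exists tl; rewrite E b_eq.
split => //; apply: leq_trans (ltnW (Dpath_size_lt (beyondE via))); rewrite size_cat.
exact: leq_trans (leqnSn _) (leq_addl (size r) (size (p :: beyond v))).
Qed.

Lemma sum_via_nbr :
  (\sum_(v in D | via_nbr v) Dcontrib S e D u v <= exp_contrib (size (rcons r p)))%R.
Proof.
rewrite exp_contribE mulr_natl mulr2n (bigID (pred1 l)); apply: lerD.
  have [via_l|nvia_l] := boolP (via_nbr l).
    rewrite (big_pred1 l) => [|v /=]; last by have [->|] := eqVneq v l; rewrite ?lD ?via_l ?andbF.
    by rewrite Dcontrib_via // beyond_leaf // exp_contrib1 mulr1.
  rewrite big_pred0 ?exprn_ge0 // => v /=.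
  by have [->|] := eqVneq v l; rewrite ?(negbTE nvia_l) ?andbF.
rewrite (eq_bigl (fun v => v \in A)) => [|v]; last by rewrite !inE andbA.
rewrite (eq_bigr (fun v => (1 / 2) ^+ size (rcons r p) * exp_contrib (size (beyond v))))%R;
  last by move=> v; rewrite inE => /and3P[_ via _]; apply: Dcontrib_via.
rewrite -mulr_sumr ler_piMr ?exprn_ge0 //.
have [->|[v1 v1A]] := set_0Vmem A; first by rewrite big_set0 ler01.
have := v1A; rewrite inE => /and3P[v1D via1 v1l].
have [b1 [tl1 [E1 eb1 _ _]]] := beyond_head v1D via1 v1l.
exact: (Dbranch_le1 gS e_sub3 eb1 (route_Dbranch v1A E1)).
Qed.

Lemma Dcontrib_del_nbr :
  (exp_contrib (size (rcons r p)) <= Dcontrib (S :\ l) (del_rel e l) (p |: (D :\ l)) u p)%R.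
Proof.
have [er ur Sr rD] := route_prefix_facts; have pl := leaf_neq_nbr.
have pr : p \notin r by move: ur; rewrite /= rcons_uniq => /andP[_ /andP[]].
apply: Dcontrib_ge; apply: (Dpath_del (D := p |: (D :\ l))) => //; apply/DpathP.
split => //; first by rewrite last_rcons.
split.
  suff -> : (p |: (D :\ l)) :&: [set u; p] = [set p] by rewrite cards1.
  apply/setP => x; rewrite !inE; have [->|xp] := eqVneq x p; first by rewrite orbT.
  by have [->|] := eqVneq x u; rewrite ?andbF // (negbTE ul) (negbTE uD).
rewrite size_rcons -cats1 take_size_cat //; apply/allP => x xr.
rewrite !inE (negbTE (allP rD x xr)) andbF orbF.
by apply: contraNneq pr => <-.
Qed.

End Route.

Lemma sum_via_nbr_le :
  (\sum_(v in D | via_nbr v) Dcontrib S e D u v <=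
   Dcontrib (S :\ l) (del_rel e l) (p |: (D :\ l)) u p)%R.
Proof.
have [v0 /andP[_ /via_nbrP[q0 Hq0 pq0]]|none] := pickP (fun v => (v \in D) && via_nbr v).
  exact: (le_trans (sum_via_nbr Hq0 pq0) (Dcontrib_del_nbr Hq0 pq0)).
by rewrite big_pred0 // Dcontrib_ge0.
Qed.

End Swap.

Lemma exp_dom_del_leaf_swap (D : {set V}) :
  exp_dom S e D -> l \in D -> p \notin D -> exp_dom (S :\ l) (del_rel e l) (p |: (D :\ l)).
Proof.
case/andP => DS /forall_inP domD lD pD; apply/andP; split.
  apply/subsetP => x; rewrite !inE => /orP[/eqP->|/andP[xl xD]].
    by rewrite leaf_neq_nbr leaf_nbr_mem.
  by rewrite xl (subsetP DS).
apply/forall_inP => u; rewrite !inE => /andP[ul uS].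
have [uD'|uD'] := boolP (u \in p |: (D :\ l)); first by apply: weightD_ge1_mem; rewrite // !inE ul.
have up : u != p by apply: contraNneq uD' => ->; rewrite !inE eqxx.
have uD : u \notin D by move: uD'; rewrite !inE ul negb_or => /andP[].
have pDl : p \notin D :\ l by rewrite !inE negb_and pD orbT.
apply: le_trans (domD u uS) _; rewrite !weightDE (big_setU1 _ pDl) [leLHS](bigID (via_nbr D u)).
by apply: lerD; [apply: sum_via_nbr_le | apply: sum_not_via_nbr].
Qed.

Lemma exp_dom_del_leaf (D : {set V}) : exp_dom S e D ->
  exists2 D', exp_dom (S :\ l) (del_rel e l) D' & #|D'| <= #|D|.
Proof.
move=> domD; have [/andP[lD pD]|keep] := boolP ((l \in D) && (p \notin D)).
  exists (p |: (D :\ l)); first exact: exp_dom_del_leaf_swap.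
  by rewrite cardsU1 (cardsD1 l D) lD !inE negb_and pD orbT.
by exists (D :\ l); [apply: exp_dom_del_leaf_keep | rewrite subset_leq_card // subD1set].
Qed.

Lemma gamma_e_del_leaf : gamma_e (S :\ l) (del_rel e l) <= gamma_e S e.
Proof.
apply/gamma_e_geP; split => [|D /exp_dom_del_leaf[D' domD' le_D'D]].
  exact: gamma_e_le_card.
exact: (leq_trans (gamma_e_le domD') le_D'D).
Qed.

End LeafDeletion.

Lemma is_graph_del (V : finType) (S : {set V}) (e : rel V) l :
  is_graph S e -> is_graph (S :\ l) (del_rel e l).
Proof.
move=> gS; split; [|split].
- move=> x y /andP[/andP[exy xl] yl]; rewrite !inE xl yl.
  by rewrite (is_graph_meml gS exy) (is_graph_memr gS exy).
- by move=> x y; rewrite /del_rel /= (is_graph_sym gS x y) andbAC.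
- by move=> x; rewrite /del_rel /= (is_graph_irr gS).
Qed.

Lemma subcubic_del (V : finType) (S : {set V}) (e : rel V) l :
  subcubic S e -> subcubic (S :\ l) (del_rel e l).
Proof.
move=> sub3 x; rewrite !inE => /andP[_ xS]; apply: leq_trans (sub3 x xS).
by apply/subset_leq_card/subsetP => y; rewrite !inE => /andP[/andP[]].
Qed.

Lemma subgraph_del (V : finType) (S' S : {set V}) (e' e : rel V) l :
  subgraph S' e' S e -> is_graph S' e' -> l \notin S' -> subgraph S' e' (S :\ l) (del_rel e l).
Proof.
case=> sub esub gS' lS'; have S'l x : x \in S' -> x != l by apply: contraTneq => ->.
split; first by apply/subsetP => x xS'; rewrite !inE S'l // (subsetP sub).
move=> x y exy; rewrite /del_rel /= esub // !S'l //.
  exact: (is_graph_memr gS' exy).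
exact: (is_graph_meml gS' exy).
Qed.

Lemma is_tree_del_leaf (V : finType) (S : {set V}) (e : rel V) l p :
  is_tree S e -> e l p -> (forall y, e l y -> y = p) -> is_tree (S :\ l) (del_rel e l).
Proof.
case=> gS _ conn acyc elp leaf; split.
- exact: is_graph_del.
- by apply/set0Pn; exists p; rewrite !inE (leaf_neq_nbr gS elp) (leaf_nbr_mem gS elp).
- move=> x y; rewrite !inE => /andP[xl xS] /andP[yl yS].
  have [q [eq lq]] := conn x y xS yS; case: (shortenP eq) lq => q' eq' uq' _ lq.
  exists q'; split => //; apply: path_del_rel => //.
  by apply: (leaf_notin_path gS leaf eq' uq' xl); rewrite lq.
- move=> c c3 uc; apply: contraTN (acyc c c3 uc) => /sub_cycle-> // x y.
  by case/andP=> /andP[].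
Qed.

(** * Leaves outside a subtree *)

Lemma path_exit (V : finType) (e : rel V) (S' : {set V}) x q : x \in S' -> path e x q ->
  exists x' q', [/\ x' \in S', path e x' q', all (fun z => z \notin S') q' & last x' q' = last x q].
Proof.
move=> xS'; elim/last_ind: q => [|q z IH]; first by exists x, [::].
rewrite rcons_path => /andP[/IH[x' [q' [x'S' eq' q'S' lq']]] ez].
have [zS'|zS'] := boolP (z \in S'); first by exists z, [::]; rewrite last_rcons.
by exists x', (rcons q' z); rewrite rcons_path eq' lq' ez all_rcons zS' q'S' !last_rcons.
Qed.

Section LeafOutsideSubtree.
Variables (V : finType) (S : {set V}) (e : rel V) (S' : {set V}) (e' : rel V).
Hypotheses (gS : is_graph S e) (e_acyc : acyclic e).
Hypotheses (gS' : is_graph S' e') (conn' : connected_graph S' e').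
Hypothesis e'_sub : forall x y, e' x y -> e x y.

Lemma acyclic_nbr_notin_subtree x q t z :
  x \in S' -> path e x (rcons q t) -> uniq (x :: rcons q t) ->
  all (fun y => y \notin S') (rcons q t) -> e t z -> z \notin x :: q -> z \notin S'.
Proof.
move=> xS' eq uq qS' etz zxq; apply/negP => zS'.
have [s [es ls]] := conn' zS' xS'; case: (shortenP es) ls => r' er' ur' _.
case/lastP: r' er' ur' => [|r x'] er' ur'; rewrite ?last_rcons => lr.
  by move: zxq; rewrite -lr mem_head.
subst x'; set c := x :: rcons q t ++ z :: r.
have c_cycle : cycle e c.
  rewrite /c /= rcons_cat cat_path eq last_rcons /= etz.
  exact: (sub_path e'_sub er').
have rS' : all (fun y => y \in S') (z :: r).
  by rewrite /= zS'; move: (path_is_graph_mem gS' er'); rewrite all_rcons => /andP[].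
have c_uniq : uniq c.
  rewrite /c -cat_cons cat_uniq uq; move: ur'; rewrite -rcons_cons rcons_uniq => /andP[xzr ->].
  rewrite andbT; apply/hasPn => y yzr; rewrite inE negb_or.
  apply/andP; split; first by apply: contraNneq xzr => <-.
  by apply: contraTN (allP rS' y yzr) => /(allP qS').
have c_size : 3 <= size c by rewrite /c /= size_cat size_rcons /= addnS.
by move: (e_acyc c_size c_uniq); rewrite c_cycle.
Qed.

Lemma exists_leaf_beyond k x q :
  x \in S' -> path e x q -> uniq (x :: q) -> all (fun y => y \notin S') q -> q != [::] ->
  #|V| - size q <= k -> exists l p, [/\ l \notin S', e l p & forall y, e l y -> y = p].
Proof.
elim: k q => [|k IH] q xS' eq uq qS' qn sz.
  have := max_card (mem (x :: q)); rewrite (card_uniqP uq) /= ltnNge.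
  by move: sz; rewrite leqn0 subn_eq0 => ->.
case/lastP: q eq uq qS' qn sz => [//|q t] eq uq qS' _ sz.
have [leaf|] := boolP [forall z, e t z ==> (z == last x q)].
  exists t, (last x q); split; first by move: qS'; rewrite all_rcons => /andP[].
    by move: eq; rewrite rcons_path (is_graph_sym gS) => /andP[].
  by move=> y ety; move/forallP/(_ y): leaf; rewrite ety => /eqP.
case/forallPn => z; rewrite negb_imply => /andP[etz zl].
have zq := acyclic_path_nbr_fresh e_acyc eq uq etz zl.
have zS' := acyclic_nbr_notin_subtree xS' eq uq qS' etz zq.
have zt : z != t by apply: contraTneq etz => ->; rewrite (is_graph_irr gS).
apply: (IH (rcons (rcons q t) z)) => //.
- by rewrite rcons_path eq last_rcons etz.
- by rewrite -rcons_cons rcons_uniq uq andbT -rcons_cons mem_rcons inE negb_or zt.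
- by rewrite all_rcons zS'.
- by rewrite -size_eq0 size_rcons.
- by move: sz; rewrite !size_rcons !subnS; case: (_ - _) => [|[]].
Qed.

End LeafOutsideSubtree.

Lemma exists_leaf_outside (V : finType) (S : {set V}) (e : rel V) (S' : {set V}) (e' : rel V) :
  is_tree S e -> is_tree S' e' -> subgraph S' e' S e -> ~~ (S \subset S') ->
  exists l p, [/\ l \notin S', e l p & forall y, e l y -> y = p].
Proof.
case=> gS _ conn acyc [gS' /set0Pn[s sS'] conn' _] [sub esub] /subsetPn[w wS wS'].
have [q [eq lq]] := conn s w (subsetP sub s sS') wS.
have [x [q' [xS' eq' q'S' lq']]] := path_exit sS' eq.
case: (shortenP eq') lq' => q'' eq'' uq'' sub'' lq''.
apply: (exists_leaf_beyond gS acyc gS' conn' esub (k := #|V|) xS' eq'' uq'') => //.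
- by apply/allP => y /sub'' /(allP q'S').
- by apply: contraNneq wS' => q''0; rewrite -lq -lq'' q''0.
- exact: leq_subr.
Qed.

Lemma Dpath_spanning_subtree (V : finType) (S : {set V}) (e e' : rel V) (D : {set V}) u v q :
  is_tree S e -> is_tree S e' -> (forall x y, e' x y -> e x y) ->
  Dpath S e D u v q -> Dpath S e' D u v q.
Proof.
case=> gS _ _ acyc [_ _ conn' _] esub /DpathP[eq lq uq Sq rest].
have /andP[uS _] := Sq; have vS : v \in S by rewrite -lq (allP Sq) // mem_last.
have [r [er lr]] := conn' u v uS vS; case: (shortenP er) lr => r' er' ur' _ lr.
have qr' : q = r'.
  apply: (acyclic_path_uniq (is_graph_sym gS) acyc eq (sub_path esub er') uq ur').
  by rewrite lr lq.
by apply/DpathP; split => //; rewrite qr'.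
Qed.

Lemma gamma_e_spanning_subtree (V : finType) (S : {set V}) (e e' : rel V) :
  is_tree S e -> is_tree S e' -> (forall x y, e' x y -> e x y) -> gamma_e S e' <= gamma_e S e.
Proof.
move=> tS tS' esub; apply/gamma_e_geP; split => [|D /andP[DS /forall_inP domD]].
  exact: gamma_e_le_card.
apply: gamma_e_le; rewrite /exp_dom DS; apply/forall_inP => u uS.
apply: le_trans (domD u uS) _; rewrite !weightDE; apply: ler_sum => v _.
by apply: Dcontrib_le => q; apply: Dpath_spanning_subtree.
Qed.

Lemma gamma_e_subtree_ind (V : finType) (S' : {set V}) (e' : rel V) n (S : {set V}) (e : rel V) :
  #|S| <= n -> is_tree S e -> subcubic S e -> subgraph S' e' S e -> is_tree S' e' ->
  gamma_e S' e' <= gamma_e S e.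
Proof.
elim: n S e => [|n IH] S e cardS tS sub3 sg tS'.
  case: tS => _ /set0Pn[x xS] _ _; move: cardS; rewrite leqn0 => /eqP/cards0_eq S0.
  by move: xS; rewrite S0 inE.
have [sub_S'|] := boolP (S \subset S').
  case: sg => S'S esub; have S'E : S' = S by apply/eqP; rewrite eqEsubset S'S.
  by rewrite S'E in tS' *; apply: gamma_e_spanning_subtree.
case/(exists_leaf_outside tS tS' sg) => l [p [lS' elp leaf]].
have [gS _ _ acyc] := tS.
apply: leq_trans (gamma_e_del_leaf gS acyc sub3 elp leaf).
apply: IH.
- by move: cardS; rewrite (cardsD1 l S) (leaf_mem gS elp).
- exact: is_tree_del_leaf tS elp leaf.
- exact: subcubic_del.
- by apply: subgraph_del => //; case: tS'.
- exact: tS'.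
Qed.

Theorem lemma2 (V : finType) (S : {set V}) (e : rel V) (S' : {set V}) (e' : rel V) :
  is_tree S e -> subcubic S e -> subgraph S' e' S e -> is_tree S' e' ->
  gamma_e S' e' <= gamma_e S e.
Proof. exact: gamma_e_subtree_ind. Qed.
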